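(* Under the assumptions (i), (ii), (iii) of the Main Result (including convexity of $L_T$), any point $\hat\theta_T$ with $\nabla L_T(\hat\theta_T)=0$ lies in $\mathcal{B}=\{\hat\theta_T^{\mathrm{NS}}+e:\|e\|_\Sigma\le r\}$.
   Context: Setting: $\ell_1,\dots,\ell_n:\mathbb{R}^d\to\mathbb{R}$ twice continuously differentiable, $T\subseteq[n]$, $L_T=\sum_{i\notin T}\ell_i$ convex, $\hat\theta$ with $\sum_{i=1}^n\nabla\ell_i(\hat\theta)=0$, $H_\theta=\nabla^2L_T(\theta)$, $g=\nabla L_T(\hat\theta)$, $H=H_{\hat\theta}$ invertible, $\hat\theta_T^{\mathrm{NS}}=\hat\theta-H^{-1}g$; $\Sigma$ positive definite, $\|v\|_M=\sqrt{v^\top Mv}$, $r>0$. (i): $\|\Sigma^{1/2}H_\theta^{-1}\Sigma^{1/2}\|_{\mathrm{op}}\le C_{\mathrm{op}}$ for all $\theta\in\mathcal B$. (ii): $\|(H_\theta-H)H^{-1}g\|_{\Sigma^{-1}}\le C_h$ for all $\theta$ on the segment $[\hat\theta,\hat\theta_T^{\mathrm{NS}}]$. (iii): $C_hC_{\mathrm{op}}<r$. *)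

From HB Require Import structures.
From mathcomp Require Import all_boot all_order all_algebra.
From mathcomp Require Import all_classical all_reals all_analysis.
Set Implicit Arguments. Unset Strict Implicit. Unset Printing Implicit Defensive.
Import Order.TTheory GRing.Theory Num.Theory.
Import numFieldNormedType.Exports.
Local Open Scope ring_scope.
Local Open Scope classical_set_scope.

Section Defs.
Variables (R : realType) (d : nat).
Notation V := 'cV[R]_d.

Definition ebasis (i : 'I_d) : V := delta_mx i 0.

Definition partial (f : V -> R) (i : 'I_d) (x : V) : R := 'D_(ebasis i) f x.

Definition grad (f : V -> R) (x : V) : V := \col_i partial f i x.

Definition hess (f : V -> R) (x : V) : 'M[R]_d :=
  \matrix_(i, j) 'D_(ebasis j) (partial f i) x.

Definition C2 (f : V -> R) : Prop :=
  (forall x, differentiable f x) /\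
  (forall x, differentiable (grad f) x) /\
  (forall i j, continuous (fun x => hess f x i j)).

Definition convex_fun (f : V -> R) : Prop :=
  forall (x y : V) (t : R), 0 <= t <= 1 ->
    f ((1 - t) *: x + t *: y) <= (1 - t) * f x + t * f y.

Definition qform (M : 'M[R]_d) (v : V) : R := ((v^T *m M *m v) 0 0).
Definition mnorm (M : 'M[R]_d) (v : V) : R := Num.sqrt (qform M v).

Definition enorm (v : V) : R := Num.sqrt ((v^T *m v) 0 0).

Definition posdef (M : 'M[R]_d) : Prop :=
  M^T = M /\ forall v : V, v != 0 -> 0 < qform M v.
Definition possemidef (M : 'M[R]_d) : Prop :=
  M^T = M /\ forall v : V, 0 <= qform M v.

Definition is_sqrtm (S Sigma : 'M[R]_d) : Prop :=
  possemidef S /\ S *m S = Sigma.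

Definition opnorm (A : 'M[R]_d) : R :=
  sup [set enorm (A *m v) | v in [set v : V | enorm v <= 1]].

End Defs.

From HB Require Import structures.
From mathcomp Require Import all_boot all_order all_algebra.
From mathcomp Require Import all_classical all_reals all_analysis.
From mathcomp.algebra_tactics Require Import ring lra.
Import Order.TTheory GRing.Theory Num.Theory.
Import numFieldNormedType.Exports.
Local Open Scope ring_scope.
Local Open Scope classical_set_scope.

(* Write w := thetaT - thetaNS and suppose rho := ||w||_Sigma > r.  The slope
   phi(t) := D_w L_T (thetaNS + t w) is nondecreasing by convexity and vanishes
   at t = 1, so phi(r / rho) <= 0.  A mean value step from thetahat to the Newton
   point writes phi(0) as -w^T (H_theta - H) H^-1 g, so phi(0) >= -rho C_h by
   (ii).  For t <= r / rho the point stays in B, where (i) and Cauchy-Schwarz in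
   the H_theta-inner product give w^T H_theta w >= rho^2 / C_op.  Hence
   phi(r / rho) >= rho (r / C_op - C_h) > 0 by (iii), a contradiction. *)

Section Calculus.
Context {R : realType} {d : nat}.
Implicit Types (f g : 'cV[R]_d -> R) (x p v w : 'cV[R]_d) (s t h : R).
Local Notation eb := (@ebasis R d).

Lemma line_difference_quotient f p v t :
  (fun h : R => h^-1 *: (((fun s : R => f (p + s *: v)) \o shift t) (h *: 1)
                         - f (p + t *: v)))
  = (fun h : R => h^-1 *: ((f \o shift (p + t *: v)) (h *: v) - f (p + t *: v))).
Proof.
apply: funext => h /=; congr (_ *: (f _ - _)).
by rewrite [h *: 1]mulr1 scalerDl addrCA addrA.
Qed.

Lemma derivable_line f p v t :
  derivable (fun s : R => f (p + s *: v)) t 1 <-> derivable f (p + t *: v) v.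
Proof. by rewrite /derivable line_difference_quotient. Qed.

Lemma derive_line f p v t :
  'D_1 (fun s : R => f (p + s *: v)) t = 'D_v f (p + t *: v).
Proof. by rewrite /derive line_difference_quotient. Qed.

Lemma is_derive_line f p v t : derivable f (p + t *: v) v ->
  is_derive t 1 (fun s : R => f (p + s *: v)) ('D_v f (p + t *: v)).
Proof. by move=> fv; apply: DeriveDef; rewrite ?derivable_line ?derive_line. Qed.

Lemma colvec_ebasis_sum v : v = \sum_j v j 0 *: eb j.
Proof.
apply/matrixP => i k; rewrite (ord1 k) summxE (bigD1 i) //= big1.
  by rewrite !mxE eqxx mulr1 addr0.
by move=> j ji; rewrite !mxE eq_sym (negbTE ji) mulr0.
Qed.

Lemma derive_grad f x w : differentiable f x ->
  'D_w f x = (w^T *m grad f x) 0 0.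
Proof.
move=> fx; rewrite deriveE // {1}(colvec_ebasis_sum w) linear_sum /= !mxE.
by apply: eq_bigr => j _; rewrite linearZ /= -deriveE // !mxE.
Qed.

Lemma partial_gradE f i : partial f i = fun x => grad f x i 0.
Proof. by apply: funext => x; rewrite mxE. Qed.

Lemma derivable_partial f i x v :
  differentiable (grad f) x -> derivable (partial f i) x v.
Proof.
move=> gx; rewrite partial_gradE.
by move: (@diff_derivable _ _ _ _ _ v gx) => /derivable_mxP; apply.
Qed.

Lemma differentiable_partial f i x :
  differentiable (grad f) x -> differentiable (partial f i) x.
Proof.
move=> gx; rewrite partial_gradE.
exact: differentiable_comp gx (differentiable_coord _ i 0).
Qed.

Lemma derive_partial f i x v : differentiable (grad f) x ->
  'D_v (partial f i) x = (hess f x *m v) i 0.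
Proof.
move=> gx; rewrite derive_grad; last exact: differentiable_partial.
by rewrite !mxE; apply: eq_bigr => j _; rewrite !mxE mulrC.
Qed.

Lemma is_derive_derive_line f x v w s :
  (forall y, differentiable f y) -> (forall y, differentiable (grad f) y) ->
  is_derive s 1 (fun t : R => 'D_w f (x + t *: v))
     ((w^T *m hess f (x + s *: v) *m v) 0 0).
Proof.
move=> df dg.
have Dk k : is_derive s 1 (w k 0 *: (fun t : R => partial f k (x + t *: v)))
    (w k 0 *: 'D_v (partial f k) (x + s *: v)).
  by apply: is_deriveZ; apply: is_derive_line; apply: derivable_partial.
have := is_derive_sum Dk; rewrite fct_sumE.
have -> : (fun t : R => \sum_k (w k 0 *: (fun t => partial f k (x + t *: v))) t)
    = (fun t : R => 'D_w f (x + t *: v)).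
  by apply: funext => t; rewrite derive_grad // !mxE; apply: eq_bigr => k _; rewrite !mxE.
move/is_derive_eq; apply.
by rewrite -mulmxA !mxE; apply: eq_bigr => k _; rewrite derive_partial // !mxE.
Qed.

Lemma MVT_open (F dF : R -> R) (h : R) : 0 < h ->
  (forall t, is_derive t 1 F (dF t)) ->
  exists2 c, 0 < c < h & F h - F 0 = dF c * h.
Proof.
move=> h0 dF_.
have [c c_in ->] := @MVT R F dF 0 h h0 (fun t _ => dF_ t)
  (derivable_within_continuous (fun t _ => @ex_derive _ _ _ _ _ _ _ (dF_ t))).
by exists c; [move: c_in; rewrite in_itv | rewrite subr0].
Qed.

Lemma derive_line_MVT f x v w h :
  (forall y, differentiable f y) -> (forall y, differentiable (grad f) y) -> 0 < h ->
  exists2 c, 0 < c < h &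
    'D_w f (x + h *: v) - 'D_w f x = (w^T *m hess f (x + c *: v) *m v) 0 0 * h.
Proof.
move=> df dg h0.
have [c ch E] := @MVT_open _ _ h h0 (fun t => is_derive_derive_line f x v w t df dg).
by exists c; rewrite // -E scale0r addr0.
Qed.

Lemma second_difference_MVT f x i j h :
  (forall y, differentiable f y) -> (forall y, differentiable (grad f) y) ->
  0 < h -> exists c s, [/\ 0 < c < h, 0 < s < h &
  f (x + h *: eb j + h *: eb i) - f (x + h *: eb i) - (f (x + h *: eb j) - f x)
   = h * h * hess f (x + c *: eb i + s *: eb j) i j].
Proof.
move=> df dg h0.
pose F t := f (x + h *: eb j + t *: eb i) - f (x + t *: eb i).
have dF t : is_derive t 1 F
    (partial f i (x + h *: eb j + t *: eb i) - partial f i (x + t *: eb i)).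
  by apply: is_deriveB; apply: is_derive_line; apply: diff_derivable.
have [c ch EF] := @MVT_open F _ h h0 dF.
pose G s := partial f i (x + c *: eb i + s *: eb j).
have dG s : is_derive s 1 G (hess f (x + c *: eb i + s *: eb j) i j).
  by rewrite mxE; apply: is_derive_line; apply: derivable_partial.
have [s sh EG] := @MVT_open G _ h h0 dG.
exists c, s; split => //.
move: EF; rewrite /F !scale0r !addr0 => ->.
move: EG; rewrite /G !scale0r !addr0 [x + h *: _ + c *: _]addrAC => ->.
by rewrite -mulrA mulrC.
Qed.

(* Both mixed partials are the same second difference divided by h^2. *)
Lemma hess_swap_near f x i j h :
  (forall y, differentiable f y) -> (forall y, differentiable (grad f) y) ->
  0 < h -> exists p q, [/\ `|x - p| <= h * (`|eb i| + `|eb j|),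
    `|x - q| <= h * (`|eb i| + `|eb j|) & hess f p i j = hess f q j i].
Proof.
move=> df dg h0.
have near_x c s a b : 0 < c < h -> 0 < s < h ->
    `|x - (x + c *: eb a + s *: eb b)| <= h * (`|eb a| + `|eb b|).
  move=> /andP[c0 ch] /andP[s0 sh].
  rewrite -addrA opprD addrA subrr sub0r normrN mulrDr.
  apply: le_trans (ler_normD _ _) _; rewrite !normrZ !gtr0_norm //.
  by apply: lerD; apply: ler_wpM2r => //; apply: ltW.
have [c [s [ch sh Eij]]] := second_difference_MVT f x i j h df dg h0.
have [c' [s' [ch' sh' Eji]]] := second_difference_MVT f x j i h df dg h0.
exists (x + c *: eb i + s *: eb j), (x + c' *: eb j + s' *: eb i); split.
- exact: near_x.
- by rewrite [`|eb i| + _]addrC; apply: near_x.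
apply: (@mulfI _ (h * h)); first by rewrite mulf_neq0 // gt_eqF.
have swap (a b a' b' : R) : a - b - (a' - b') = a - a' - (b - b') by ring.
by rewrite -Eij -Eji [x + h *: eb i + h *: eb j]addrAC swap.
Qed.

Lemma eq_near_continuous (V : normedModType R) (A B : V -> R) (a : V) :
  {for a, continuous A} -> {for a, continuous B} ->
  (forall e : R, 0 < e -> exists y z, [/\ `|a - y| < e, `|a - z| < e & A y = B z]) ->
  A a = B a.
Proof.
move=> cA cB near_eq; apply/eqP; rewrite -subr_eq0 -normr_le0 leNgt.
apply/negP => e_gt0; set e := `|_| in e_gt0.
have e2 : 0 < e / 2 by rewrite divr_gt0.
have ball_at (F : V -> R) : {for a, continuous F} -> exists2 δ, 0 < δ &
    forall y, `|a - y| < δ -> `|F a - F y| < e / 2.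
  move=> /cvgrPdist_lt/(_ _ e2)/nbhs_ballP[δ δ0 aδ].
  by exists δ => // y ay; apply: aδ; rewrite -ball_normE.
have [δA δA0 nearA] := ball_at A cA; have [δB δB0 nearB] := ball_at B cB.
have δ0 : 0 < Num.min δA δB by rewrite lt_min δA0 δB0.
have [δ_A δ_B] : Num.min δA δB <= δA /\ Num.min δA δB <= δB.
  by rewrite !ge_min !lexx orbT.
have [y [z [ay az Eyz]]] := near_eq _ δ0.
have Ay := nearA y (lt_le_trans ay δ_A).
have Bz : `|A y - B a| < e / 2 by rewrite Eyz distrC; apply: nearB (lt_le_trans az δ_B).
suff : e < e / 2 + e / 2 by rewrite -splitr ltxx.
exact: le_lt_trans (ler_distD (A y) _ _) (ltrD Ay Bz).
Qed.

Lemma hess_sym f x : C2 f -> (hess f x)^T = hess f x.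
Proof.
move=> [df [dg hc]]; apply/matrixP => j i; rewrite mxE.
apply: (@eq_near_continuous _ (fun y => hess f y i j) (fun y => hess f y j i) x
  (hc i j x) (hc j i x)) => e e_gt0.
pose K := `|eb i| + `|eb j|.
have K_ge0 : 0 <= K by rewrite addr_ge0.
have hK : e / (K + 1) * K < e.
  by rewrite mulrAC ltr_pdivrMr ?ltr_pM2l ?ltrDl // ltr_wpDl.
have [p [q [xp xq Epq]]] := hess_swap_near f x i j (e / (K + 1)) df dg
  (divr_gt0 e_gt0 (ltr_wpDl K_ge0 ltr01)).
by exists p, q; split; [exact: le_lt_trans xp hK | exact: le_lt_trans xq hK |].
Qed.

Lemma hess_entryE f i j :
  (fun x => hess f x i j) = (fun x => 'D_(eb j) (partial f i) x).
Proof. by apply: funext => x; rewrite mxE. Qed.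

Lemma C2_add f g : C2 f -> C2 g -> C2 (f + g).
Proof.
move=> [df [dgf hf]] [dg [dgg hg]].
have partialD i : partial (f + g) i = partial f i + partial g i.
  by apply: funext => x; rewrite /partial deriveD //; apply: diff_derivable.
have gradD : grad (f + g) = grad f + grad g.
  by apply: funext => x; apply/matrixP => i k; rewrite !mxE partialD.
split; first by move=> x; apply: differentiableD.
split; first by rewrite gradD => x; apply: differentiableD.
move=> i j; have cf := hf i j; have cg := hg i j.
rewrite hess_entryE in cf; rewrite hess_entryE in cg; rewrite hess_entryE partialD.
have -> : (fun x => 'D_(eb j) (partial f i + partial g i) x)
    = (fun x => 'D_(eb j) (partial f i) x) + (fun x => 'D_(eb j) (partial g i) x).
  rewrite [RHS]addrfctE; apply: funext => x /=.
  by rewrite deriveD //; apply: derivable_partial.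
by move=> x; exact: continuousD (cf x) (cg x).
Qed.

Lemma C2_cst0 : C2 (0 : 'cV[R]_d -> R).
Proof.
have partial0 i : partial (0 : 'cV[R]_d -> R) i = 0.
  by apply: funext => x; rewrite /partial derive_cst.
have grad0 : grad (0 : 'cV[R]_d -> R) = 0.
  by apply: funext => x; apply/matrixP => i k; rewrite !mxE partial0.
split; first by move=> x; exact: differentiable_cst.
split; first by rewrite grad0 => x; exact: differentiable_cst.
move=> i j; have -> : (fun x => hess (0 : 'cV[R]_d -> R) x i j) = 0.
  by apply: funext => x; rewrite mxE partial0 derive_cst.
exact: cst_continuous.
Qed.

Lemma C2_sum (I : Type) (r : seq I) (P : pred I) (F : I -> 'cV[R]_d -> R) :
  (forall i, P i -> C2 (F i)) -> C2 (fun x => \sum_(i <- r | P i) F i x).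
Proof.
move=> C2F; elim: r => [|a r IH].
  have -> : (fun x => \sum_(i <- [::] | P i) F i x) = 0.
    by apply: funext => x; rewrite big_nil.
  exact: C2_cst0.
case Pa: (P a).
  have -> : (fun x => \sum_(i <- a :: r | P i) F i x)
      = F a + (fun x => \sum_(i <- r | P i) F i x).
    by rewrite addrfctE; apply: funext => x; rewrite big_cons Pa.
  exact: C2_add (C2F a Pa) IH.
have -> : (fun x => \sum_(i <- a :: r | P i) F i x)
    = (fun x => \sum_(i <- r | P i) F i x).
  by apply: funext => x; rewrite big_cons Pa.
exact: IH.
Qed.

End Calculus.

Section Convexity.
Context {R : realType} {d : nat}.
Implicit Types (f : 'cV[R]_d -> R) (x y v : 'cV[R]_d) (s t : R).

Lemma convex_tangent f x y : convex_fun f -> differentiable f x ->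
  'D_(y - x) f x <= f y - f x.
Proof.
move=> cf fx.
set q := fun h : R => h^-1 *: ((f \o shift x) (h *: (y - x)) - f x).
have q_cvg : q @ 0^'+ --> 'D_(y - x) f x.
  move=> A /(@diff_derivable _ _ _ _ _ (y - x) fx) /nbhs_ballP [_ /posnumP[e] eA].
  by exists e%:num => //= z ez; rewrite lt_def => /andP[z0 _]; apply: eA.
rewrite -(cvg_lim _ q_cvg) //; apply: limr_le; first by apply/cvg_ex; exists ('D_(y - x) f x).
near=> h.
have h0 : 0 < h by near: h; exact: nbhs_right_gt.
have h1 : h <= 1 by near: h; apply: nbhs_right_ltW; exact: ltr01.
have := cf x y h; rewrite h1 (ltW h0) => /(_ isT) cvx.
rewrite /q /= [_ *: _]mulrC ler_pdivrMr // (_ : _ + x = (1 - h) *: x + h *: y).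
  by move: cvx; lra.
by rewrite scalerBr scalerBl scale1r addrC addrA [LHS]addrAC.
Unshelve. all: end_near.
Qed.

Lemma derive_scale f x v (k : R) : differentiable f x ->
  'D_(k *: v) f x = k * 'D_v f x.
Proof. by move=> fx; rewrite !deriveE // linearZ. Qed.

Lemma derive_line_nondecreasing f x v s t : convex_fun f ->
  (forall y, differentiable f y) -> s <= t ->
  'D_v f (x + s *: v) <= 'D_v f (x + t *: v).
Proof.
move=> cf df; rewrite le_eqVlt => /predU1P [-> // | st].
have diff_pts a b : (x + b *: v) - (x + a *: v) = (b - a) *: v.
  by rewrite opprD addrACA subrr add0r scalerBl.
have := convex_tangent f (x + s *: v) (x + t *: v) cf (df _).
have := convex_tangent f (x + t *: v) (x + s *: v) cf (df _).
rewrite !diff_pts !derive_scale // => Dt Ds.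
have : (t - s) * ('D_v f (x + s *: v) - 'D_v f (x + t *: v)) <= 0 by lra.
by rewrite pmulr_rle0 ?subr_gt0 // subr_le0.
Qed.

Lemma hess_psd f x v : C2 f -> convex_fun f -> 0 <= qform (hess f x) v.
Proof.
move=> [df [dg _]] cf.
have D2 := is_derive_derive_line f x v v 0 df dg.
rewrite /qform -[x]addr0 -(scale0r v) -(@derive_val _ _ _ _ _ _ _ D2) /derive.
apply: limr_ge; first exact: (@ex_derive _ _ _ _ _ _ _ D2).
near=> h.
have h0 : h != 0 by near: h; exact: nbhs_dnbhs_neq.
rewrite /= [h *: 1]mulr1 addr0 scale0r addr0.
have mono a b := derive_line_nondecreasing f x v a b cf df.
case: (ltrgtP h 0) h0 => // hs _.
- apply: mulr_le0; first by rewrite invr_le0 ltW.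
  by rewrite subr_le0; have := mono h 0 (ltW hs); rewrite scale0r addr0.
- apply: mulr_ge0; first by rewrite invr_ge0 ltW.
  by rewrite subr_ge0; have := mono 0 h (ltW hs); rewrite scale0r addr0.
Unshelve. all: end_near.
Qed.

Lemma derive_toward_critical_le0 f x y s : convex_fun f ->
  (forall z, differentiable f z) -> grad f y = 0 -> s <= 1 ->
  'D_(y - x) f (x + s *: (y - x)) <= 0.
Proof.
move=> cf df gy s_le1.
have := derive_line_nondecreasing f x (y - x) s 1 cf df s_le1.
by rewrite scale1r (addrC x (y - x)) subrK (derive_grad f y (y - x) (df y)) gy mulmx0 mxE.
Qed.

End Convexity.

Section QuadraticForms.
Context {R : realType} {d : nat}.
Implicit Types (M A S : 'M[R]_d) (u w x y z : 'cV[R]_d).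

Definition bform M x y : R := (x^T *m M *m y) 0 0.

Lemma bformC M x y : M^T = M -> bform M x y = bform M y x.
Proof.
move=> sM; rewrite /bform; transitivity ((x^T *m M *m y)^T 0 0).
  by rewrite [RHS]mxE.
by rewrite !trmx_mul trmxK sM mulmxA.
Qed.

Lemma bformDl M x1 x2 y : bform M (x1 + x2) y = bform M x1 y + bform M x2 y.
Proof. by rewrite /bform linearD /= !mulmxDl mxE. Qed.

Lemma bformDr M x y1 y2 : bform M x (y1 + y2) = bform M x y1 + bform M x y2.
Proof. by rewrite /bform mulmxDr mxE. Qed.

Lemma bformZl M k x y : bform M (k *: x) y = k * bform M x y.
Proof. by rewrite /bform linearZ /= -!scalemxAl mxE. Qed.

Lemma bformZr M k x y : bform M x (k *: y) = k * bform M x y.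
Proof. by rewrite /bform -scalemxAr mxE. Qed.

Lemma discriminant_le0 (a b c : R) : 0 <= c ->
  (forall t, 0 <= a + 2 * b * t + c * t ^+ 2) -> b ^+ 2 <= a * c.
Proof.
move=> c0 nonneg; case: (ltrgtP c 0) c0 => // [c_gt0 _ | c_eq0 _]; last subst c.
  have := nonneg (- b / c).
  have -> : a + 2 * b * (- b / c) + c * (- b / c) ^+ 2 = (a * c - b ^+ 2) / c.
    by field; rewrite gt_eqF.
  by rewrite pmulr_lge0 ?invr_gt0 // subr_ge0.
have [-> | b_neq0] := eqVneq b 0; first by rewrite expr0n mulr0.
have := nonneg (- (a + 1) / (2 * b)).
have -> : a + 2 * b * (- (a + 1) / (2 * b)) + 0 * (- (a + 1) / (2 * b)) ^+ 2 = -1.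
  by field; rewrite b_neq0.
by rewrite ler0N1.
Qed.

Lemma bform_CauchySchwarz M x y : M^T = M -> (forall z, 0 <= qform M z) ->
  bform M x y ^+ 2 <= qform M x * qform M y.
Proof.
move=> sM psdM; apply: discriminant_le0 => [|t]; first exact: psdM.
have : 0 <= bform M (x + t *: y) (x + t *: y) by exact: psdM.
rewrite bformDl !bformDr !bformZl !bformZr (bformC M y x sM).
by congr (0 <= _); rewrite /bform /qform; ring.
Qed.

Lemma bform_le_mnorm M x y : M^T = M -> (forall z, 0 <= qform M z) ->
  `|bform M x y| <= mnorm M x * mnorm M y.
Proof.
move=> sM psdM; rewrite -sqrtr_sqr -sqrtrM // ler_sqrt ?mulr_ge0 //.
exact: bform_CauchySchwarz.
Qed.

Lemma dot_self_sum u : (u^T *m u) 0 0 = \sum_i u i 0 ^+ 2.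
Proof. by rewrite mxE; apply: eq_bigr => i _; rewrite mxE expr2. Qed.

Lemma dot_self_ge0 u : 0 <= (u^T *m u) 0 0.
Proof. by rewrite dot_self_sum sumr_ge0 // => i _; rewrite sqr_ge0. Qed.

Lemma enorm_ge0 u : 0 <= enorm u.
Proof. exact: sqrtr_ge0. Qed.

Lemma enorm_sqr u : enorm u ^+ 2 = (u^T *m u) 0 0.
Proof. by rewrite sqr_sqrtr // dot_self_ge0. Qed.

Lemma enormZ k u : enorm (k *: u) = `|k| * enorm u.
Proof.
rewrite /enorm linearZ /= linearZ /= -scalemxAl scalerA mxE -expr2.
by rewrite sqrtrM ?sqr_ge0 // sqrtr_sqr.
Qed.

Lemma coord_le_enorm u i : `|u i 0| <= enorm u.
Proof.
rewrite -sqrtr_sqr ler_sqrt ?dot_self_ge0 // dot_self_sum (bigD1 i) //=.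
by rewrite lerDl sumr_ge0 // => j _; rewrite sqr_ge0.
Qed.

Lemma enorm_eq0 u : (enorm u == 0) = (u == 0).
Proof.
apply/eqP/eqP => [u0 | ->]; last by rewrite -(scale0r 0) enormZ normr0 mul0r.
apply/matrixP => i k; rewrite (ord1 k) mxE.
by apply/eqP; rewrite -normr_le0 -u0 coord_le_enorm.
Qed.

(* Without an upper bound the [sup] defining [opnorm] would be a junk value. *)
Lemma opnorm_set_bounded A :
  has_ubound [set enorm (A *m v) | v in [set v | enorm v <= 1]].
Proof.
exists (Num.sqrt (\sum_i (\sum_j `|A i j|) ^+ 2)) => _ [v v1 <-].
rewrite ler_sqrt ?sumr_ge0 // => [|i _]; last by rewrite sqr_ge0.
rewrite dot_self_sum; apply: ler_sum => i _.
have Av_i : `|(A *m v) i 0| <= \sum_j `|A i j|.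
  rewrite mxE; apply: le_trans (ler_norm_sum _ _ _) _; apply: ler_sum => j _.
  by rewrite normrM ler_piMr // (le_trans (coord_le_enorm v j)).
by rewrite -real_normK ?num_real // !expr2 ler_pM.
Qed.

Lemma enorm0 : enorm (0 : 'cV[R]_d) = 0.
Proof. by apply/eqP; rewrite enorm_eq0. Qed.

Lemma opnorm_ge0 A : 0 <= opnorm A.
Proof.
apply: (ub_le_sup (opnorm_set_bounded A)); exists 0; rewrite /= ?mulmx0 enorm0 //.
Qed.

Lemma enorm_mulmx_le A u : enorm (A *m u) <= opnorm A * enorm u.
Proof.
have [-> | u_neq0] := eqVneq u 0; first by rewrite mulmx0 enorm0 mulr0.
have eu : 0 < enorm u by rewrite lt_def enorm_eq0 u_neq0 enorm_ge0.
have : enorm (A *m ((enorm u)^-1 *: u)) <= opnorm A.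
  apply: (ub_le_sup (opnorm_set_bounded A)); exists ((enorm u)^-1 *: u) => //=.
  by rewrite enormZ ger0_norm ?invr_ge0 ?enorm_ge0 // mulVf ?gt_eqF.
by rewrite -scalemxAr enormZ ger0_norm ?invr_ge0 ?enorm_ge0 // mulrC ler_pdivrMr.
Qed.

Lemma mnormZ M k u : mnorm M (k *: u) = `|k| * mnorm M u.
Proof.
rewrite /mnorm /qform linearZ /= linearZ /= -!scalemxAl scalerA mxE -expr2.
by rewrite sqrtrM ?sqr_ge0 // sqrtr_sqr.
Qed.

Lemma posdef_unitmx M : posdef M -> M \in unitmx.
Proof.
move=> [_ pdM]; rewrite unitmxE unitfE; apply/negP => /det0P [v v0 vM].
have := pdM v^T; rewrite trmx_eq0 v0 => /(_ isT).
by rewrite /qform trmxK vM mul0mx mxE ltxx.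
Qed.

Lemma posdef_qform_ge0 M z : posdef M -> 0 <= qform M z.
Proof.
move=> [_ pdM]; have [-> | z0] := eqVneq z 0; last exact: ltW (pdM z z0).
by rewrite /qform mulmx0 mxE.
Qed.

Lemma dot_le_mnorm_inv M w z : posdef M ->
  `|(w^T *m z) 0 0| <= mnorm M w * mnorm (invmx M) z.
Proof.
move=> pdM; have uM := posdef_unitmx M pdM; have [sM _] := pdM.
have -> : (w^T *m z) 0 0 = bform M w (invmx M *m z).
  by rewrite /bform mulmxA mulmxK.
have -> : mnorm (invmx M) z = mnorm M (invmx M *m z).
  by rewrite /mnorm /qform trmx_mul trmx_inv sM !mulmxA mulmxKV.
by apply: bform_le_mnorm => // z'; apply: posdef_qform_ge0.
Qed.

Lemma dot_residual A H w z : H \in unitmx ->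
  (w^T *m ((A - H) *m invmx H *m z)) 0 0
    = (w^T *m A *m (invmx H *m z)) 0 0 - (w^T *m z) 0 0.
Proof.
move=> uH; rewrite mulmxBl mulmxV // mulmxBl mul1mx mulmxBr [LHS]mxE !mulmxA.
by congr (_ + _); rewrite [LHS]mxE.
Qed.

Lemma mnorm1 u : mnorm 1%:M u = enorm u.
Proof. by rewrite /mnorm /qform mulmx1. Qed.

(* Cauchy-Schwarz for the Hm-form at w and y := Hm^-1 M w; the Hm-norm of y
   is bounded through the operator norm of S Hm^-1 S. *)
Lemma qform_le_opnorm_inv Hm S M C w : Hm^T = Hm ->
  (forall z, 0 <= qform Hm z) -> Hm \in unitmx -> is_sqrtm S M ->
  opnorm (S *m invmx Hm *m S) <= C -> qform M w <= C * qform Hm w.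
Proof.
move=> sH psdH uH [[sS _] SS] opC.
have sM : M^T = M by rewrite -SS trmx_mul sS.
have C0 : 0 <= C := le_trans (opnorm_ge0 _) opC.
set y := invmx Hm *m (M *m w); set A := S *m invmx Hm *m S.
have qM : qform M w = enorm (S *m w) ^+ 2.
  by rewrite enorm_sqr /qform -SS trmx_mul sS !mulmxA.
have w_y : bform Hm w y = qform M w by rewrite /bform /y mulmxA mulmxK // mulmxA.
have y_y : qform Hm y = bform 1%:M (S *m w) (A *m (S *m w)).
  rewrite /qform /bform /y /A mulmx1 !trmx_mul trmx_inv sH sM sS.
  by rewrite !mulmxA mulmxKV // -SS !mulmxA.
have y_le : qform Hm y <= C * qform M w.
  have psd1 z : 0 <= qform 1%:M z by rewrite /qform mulmx1 dot_self_ge0.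
  rewrite y_y; apply: le_trans (ler_norm _) _.
  apply: le_trans (bform_le_mnorm _ _ _ (trmx1 _ _) psd1) _.
  rewrite !mnorm1 qM expr2 mulrCA ler_wpM2l ?enorm_ge0 //.
  exact: le_trans (enorm_mulmx_le A _) (ler_wpM2r (enorm_ge0 _) opC).
have CS := bform_CauchySchwarz Hm w y sH psdH; rewrite w_y in CS.
have [q0 | q_neq0] := eqVneq (qform M w) 0; first by rewrite q0 mulr_ge0 ?psdH.
have q_gt0 : 0 < qform M w by rewrite lt_def q_neq0 qM sqr_ge0.
rewrite -(ler_pM2r q_gt0) -expr2; apply: le_trans CS _.
by apply: le_trans (ler_wpM2l (psdH w) y_le) _; rewrite mulrCA mulrA.
Qed.

End QuadraticForms.

Section NewtonStep.
Context {R : realType} {d : nat}.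
Implicit Types (f : 'cV[R]_d -> R) (x w : 'cV[R]_d).

(* Shaped to consume [derive_line_MVT] at h = 1 without rewriting under [hess]. *)
Lemma newton_residual_ge (Ht H M : 'M[R]_d) (x xN w g : 'cV[R]_d) (D0 DN C : R) :
  H \in unitmx -> posdef M -> xN = x - invmx H *m g ->
  DN - D0 = (w^T *m Ht *m (xN - x)) 0 0 * 1 -> D0 = (w^T *m g) 0 0 ->
  mnorm (invmx M) ((Ht - H) *m invmx H *m g) <= C -> - (mnorm M w * C) <= DN.
Proof.
move=> uH pdM -> /eqP; rewrite mulr1 subr_eq addrAC subrr add0r mulmxN mxE.
move=> /eqP -> D0E bound.
rewrite D0E addrC -opprB -(dot_residual _ _ _ _ uH) lerN2.
apply: le_trans (ler_norm _) (le_trans (dot_le_mnorm_inv _ _ _ pdM) _).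
by rewrite ler_wpM2l ?sqrtr_ge0.
Qed.

Lemma newton_slope_ge f x w M C : C2 f -> hess f x \in unitmx -> posdef M ->
  let xN := x - invmx (hess f x) *m grad f x in
  (forall t, 0 <= t <= 1 -> mnorm (invmx M)
     ((hess f (x + t *: (xN - x)) - hess f x) *m invmx (hess f x) *m grad f x) <= C) ->
  - (mnorm M w * C) <= 'D_w f xN.
Proof.
move=> [df [dg _]] uH pdM xN bound.
have [t /andP[t_gt0 t_lt1] slope] := derive_line_MVT f x (xN - x) w 1 df dg ltr01.
have xN_E : x + 1 *: (xN - x) = xN by rewrite scale1r addrC subrK.
rewrite -xN_E; have t01 : 0 <= t <= 1 by rewrite !ltW.
exact: newton_residual_ge uH pdM erefl slope (derive_grad f x w (df x)) (bound t t01).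
Qed.

Lemma hess_qform_ge f x S M C w : C2 f -> convex_fun f ->
  hess f x \in unitmx -> is_sqrtm S M ->
  opnorm (S *m invmx (hess f x) *m S) <= C -> qform M w <= C * qform (hess f x) w.
Proof.
move=> f_C2 cf uH sqM opC; apply: qform_le_opnorm_inv sqM opC => //.
  exact: hess_sym.
by move=> z; apply: hess_psd.
Qed.

Lemma slope_growth_le {rho s b D0 D1 C_op C_h : R} : 0 < rho -> 0 < s ->
  0 <= C_op -> D1 <= 0 -> D1 - D0 = b * s -> - (rho * C_h) <= D0 ->
  rho ^+ 2 <= C_op * b -> s * rho <= C_h * C_op.
Proof. by move=> *; nra. Qed.

End NewtonStep.

Theorem mainTheorem3 (R : realType) (d n : nat)
    (ell : 'I_n -> 'cV[R]_d -> R) (T : {set 'I_n})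
    (thetahat : 'cV[R]_d) (Sigma SigmaHalf : 'M[R]_d) (r C_op C_h : R) :
  let L_T := fun theta : 'cV[R]_d => \sum_(i < n | i \notin T) ell i theta in
  let H_ := fun theta : 'cV[R]_d => hess L_T theta in
  let g := grad L_T thetahat in
  let H := H_ thetahat in
  let thetaNS := thetahat - invmx H *m g in
  let B := [set theta : 'cV[R]_d | mnorm Sigma (theta - thetaNS) <= r] in
  (forall i, C2 (ell i)) ->
  convex_fun L_T ->
  \sum_(i < n) grad (ell i) thetahat = 0 ->
  H \in unitmx ->
  posdef Sigma ->
  is_sqrtm SigmaHalf Sigma ->
  0 < r ->
  (* (i) *)
  (forall theta, theta \in B ->
     H_ theta \in unitmx /\
     opnorm (SigmaHalf *m invmx (H_ theta) *m SigmaHalf) <= C_op) ->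
  (* (ii) *)
  (forall t : R, 0 <= t <= 1 ->
     let theta := thetahat + t *: (thetaNS - thetahat) in
     mnorm (invmx Sigma) ((H_ theta - H) *m invmx H *m g) <= C_h) ->
  (* (iii) *)
  C_h * C_op < r ->
  forall thetaT : 'cV[R]_d, grad L_T thetaT = 0 -> thetaT \in B.
Proof.
move=> L_T H_ g H thetaNS B ell_C2 cvxL _ uH pdS sqS r_gt0 Hi Hii Hiii thetaT gT0.
have L_C2 : C2 L_T by apply: C2_sum.
clearbody L_T; have [dL [dgL _]] := L_C2.
apply: mem_set; rewrite /B /= leNgt; apply/negP => r_lt.
set w := thetaT - thetaNS in r_lt *; set rho := mnorm Sigma w in r_lt.
have rho_gt0 : 0 < rho := lt_trans r_gt0 r_lt.
set s := r / rho.
have s_gt0 : 0 < s by rewrite divr_gt0.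
have s_rho : s * rho = r by rewrite divfK ?gt_eqF.
have s_le1 : s <= 1 by rewrite /s ler_pdivrMr // mul1r ltW.
have slope_s : 'D_w L_T (thetaNS + s *: w) <= 0.
  exact: derive_toward_critical_le0 L_T thetaNS thetaT s cvxL dL gT0 s_le1.
have slope_0 : - (rho * C_h) <= 'D_w L_T thetaNS.
  exact: newton_slope_ge L_T thetahat w Sigma C_h L_C2 uH pdS Hii.
have [tau /andP[tau_gt0 tau_lt] slope_incr] :=
  derive_line_MVT L_T thetaNS w w s dL dgL s_gt0.
have [uHtau opHtau] : H_ (thetaNS + tau *: w) \in unitmx /\
    opnorm (SigmaHalf *m invmx (H_ (thetaNS + tau *: w)) *m SigmaHalf) <= C_op.
  apply/Hi/mem_set; rewrite /B /= addrAC subrr add0r mnormZ (ger0_norm (ltW tau_gt0)).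
  by rewrite -/rho -s_rho ler_pM2r // ltW.
have curv : rho ^+ 2 <= C_op * qform (H_ (thetaNS + tau *: w)) w.
  rewrite /rho /mnorm sqr_sqrtr ?posdef_qform_ge0 //.
  exact: hess_qform_ge L_T _ SigmaHalf Sigma C_op w L_C2 cvxL uHtau sqS opHtau.
have C_op_ge0 : 0 <= C_op := le_trans (opnorm_ge0 _) opHtau.
suff : s * rho <= C_h * C_op by rewrite s_rho leNgt Hiii.
exact: slope_growth_le rho_gt0 s_gt0 C_op_ge0 slope_s slope_incr slope_0 curv.
Qed.
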